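(* If a non-P-point $\mathcal W$ in standard position on $\omega^2$ is $(2,4)$-weakly Ramsey, then $\mathcal W$ has the three-functions property: for every function $f$ on $\omega^2$ there is $H\in\mathcal W$ such that $f\restriction H$ is constant, or one-to-one, or equal to $g\circ\pi_1\restriction H$ for some one-to-one function $g$ on $\omega$.
   Context: Ultrafilters are nonprincipal. $\pi_1:\omega^2\to\omega$ is the first projection. A non-P-point in standard position is an ultrafilter $\mathcal W$ on $\omega^2$ such that $\pi_1$ is neither finite-to-one nor constant on any set in $\mathcal W$. $\mathcal W$ is $(n,t)$-weakly Ramsey if whenever $[\omega^2]^n$ is partitioned into finitely many pieces there is $H\in\mathcal W$ with $[H]^n$ meeting at most $t$ pieces. *)

(* sets are predicates. omega^2 is modelled as nat * nat. *)
From Stdlib Require Import List Arith.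
Import ListNotations.

Definition omega2 := (nat * nat)%type.

Definition pi1 (p : omega2) : nat := fst p.

Definition is_ultrafilter {X : Type} (U : (X -> Prop) -> Prop) : Prop :=
  U (fun _ => True) /\
  ~ U (fun _ => False) /\
  (forall A B : X -> Prop, U A -> (forall x, A x -> B x) -> U B) /\
  (forall A B : X -> Prop, U A -> U B -> U (fun x => A x /\ B x)) /\
  (forall A : X -> Prop, U A \/ U (fun x => ~ A x)).

Definition nonprincipal {X : Type} (U : (X -> Prop) -> Prop) : Prop :=
  forall x : X, ~ U (fun y => y = x).

Definition finite_set (S : omega2 -> Prop) : Prop :=
  exists l : list omega2, forall p, S p -> In p l.

Definition pi1_finite_to_one_on (H : omega2 -> Prop) : Prop :=
  forall n : nat, finite_set (fun p => H p /\ pi1 p = n).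

Definition pi1_constant_on (H : omega2 -> Prop) : Prop :=
  exists n : nat, forall p, H p -> pi1 p = n.

Definition non_P_point_standard (W : (omega2 -> Prop) -> Prop) : Prop :=
  is_ultrafilter W /\ nonprincipal W /\
  (forall H, W H -> ~ pi1_finite_to_one_on H /\ ~ pi1_constant_on H).

(* (2,t)-weakly Ramsey: a partition of [omega^2]^2 into finitely many pieces
   is given by a symmetric colouring c of pairs of distinct points with
   colours < k; we ask for H in W such that [H]^2 meets at most t pieces,
   i.e. the colours used on [H]^2 lie in a list of length <= t. *)
Definition weakly_Ramsey_2 (W : (omega2 -> Prop) -> Prop) (t : nat) : Prop :=
  forall (k : nat) (c : omega2 -> omega2 -> nat),
    (forall x y, x <> y -> c x y = c y x) ->
    (forall x y, x <> y -> c x y < k) ->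
    exists H, W H /\
      exists l : list nat, length l <= t /\
        forall x y, H x -> H y -> x <> y -> In (c x y) l.

Definition three_functions_property (W : (omega2 -> Prop) -> Prop) : Prop :=
  forall (Y : Type) (f : omega2 -> Y),
    exists H, W H /\
      ((forall x y, H x -> H y -> f x = f y) \/
       (forall x y, H x -> H y -> f x = f y -> x = y) \/
       (exists g : nat -> Y,
          (forall m n, g m = g n -> m = n) /\
          (forall x, H x -> f x = g (pi1 x)))).

From Stdlib Require Import List Arith Lia Classical ClassicalEpsilon.
Import ListNotations.

(* Colour a pair of points of omega^2 by whether f agrees on it, whether it
   lies in one column, and, for points x, y in columns pi1 x < pi1 y, by
   whether snd x < snd y and whether snd x < pi1 y: ten colours.  Take H in W
   using at most four of them, keeping only its infinite columns.  The shapes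
   (snd x < snd y, snd x < pi1 y), (snd x < snd y, pi1 y <= snd x) and
   (snd y <= snd x, pi1 y <= snd x) all occur in H, which leaves room for
   just one more colour.  Hence f is either constant or injective on every
   column; a second count then shows that f is constant on H, injective on H,
   or constant on columns and injective across them.  In the last case
   f = h o pi1 with h injective on the columns of H; refining H to half of
   its columns frees infinitely many values of h, which extend h to an
   injective g on omega. *)

Section Ultrafilter.

Context {X : Type} (U : (X -> Prop) -> Prop) (HU : is_ultrafilter U).

Lemma uf_mono (A B : X -> Prop) : U A -> (forall x, A x -> B x) -> U B.
Proof. destruct HU as (_ & _ & mono & _ & _); eauto. Qed.

Lemma uf_inter (A B : X -> Prop) : U A -> U B -> U (fun x => A x /\ B x).
Proof. destruct HU as (_ & _ & _ & inter & _); eauto. Qed.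

Lemma uf_split (A : X -> Prop) : U A \/ U (fun x => ~ A x).
Proof. destruct HU as (_ & _ & _ & _ & split); eauto. Qed.

Lemma uf_nonempty (A : X -> Prop) : U A -> exists x, A x.
Proof.
  intro UA; apply NNPP; intro empty.
  destruct HU as (_ & no_empty & _ & _ & _); apply no_empty.
  apply (uf_mono A); [exact UA | intros x Ax; apply empty; exists x; exact Ax].
Qed.

End Ultrafilter.

Definition unbounded (A : nat -> Prop) : Prop := forall m, exists n, A n /\ m <= n.

Definition columns (H : omega2 -> Prop) : nat -> Prop :=
  fun n => exists p, H p /\ pi1 p = n.

Definition tall_columns (H : omega2 -> Prop) : Prop :=
  forall p, H p -> forall m, exists q, H q /\ pi1 q = pi1 p /\ m <= snd q.

Definition tall_part (H : omega2 -> Prop) : omega2 -> Prop :=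
  fun p => H p /\ ~ finite_set (fun q => H q /\ pi1 q = pi1 p).

Lemma tall_part_tall (H : omega2 -> Prop) : tall_columns (tall_part H).
Proof.
  intros p [Hp infinite] m; apply NNPP; intro no_high; apply infinite.
  exists (map (fun j => (pi1 p, j)) (seq 0 m)); intros [a j] [Hq Eq].
  apply in_map_iff; exists j; split; [now rewrite <- Eq|].
  apply in_seq; split; [lia|].
  destruct (Nat.lt_ge_cases j m) as [|high]; [lia|exfalso; apply no_high].
  exists (a, j); repeat split; [exact Hq | now rewrite Eq | exact Eq | exact high].
Qed.

Lemma tall_part_in (W : (omega2 -> Prop) -> Prop) (H : omega2 -> Prop) :
  non_P_point_standard W -> W H -> W (tall_part H).
Proof.
  intros (HW & _ & not_P) WH.
  destruct (uf_split W HW (tall_part H)) as [|Wshort]; [assumption|exfalso].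
  apply (proj1 (not_P _ (uf_inter W HW _ _ WH Wshort))); intro n.
  destruct (classic (finite_set (fun q => H q /\ pi1 q = n))) as [[l Hl] | infinite].
  - exists l; intros p [[Hp _] Ep]; apply Hl; split; assumption.
  - exists []; intros p [[Hp short] Ep]; apply short; split; [exact Hp|].
    now rewrite Ep.
Qed.

(* Induction on the bound: a W-set inside the columns < m+1 either meets
   column m in a W-set, on which pi1 is constant, or avoids it. *)
Lemma columns_unbounded (W : (omega2 -> Prop) -> Prop) :
  non_P_point_standard W -> forall H, W H -> unbounded (columns H).
Proof.
  intros (HW & _ & not_P) H WH m; revert H WH; induction m as [|m IH]; intros H WH.
  - destruct (uf_nonempty W HW H WH) as [p Hp].
    exists (pi1 p); split; [exists p; auto | lia].
  - destruct (classic (exists p, H p /\ S m <= pi1 p)) as [[p [Hp Lp]] | low].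
    { exists (pi1 p); split; [exists p; auto | exact Lp]. }
    destruct (uf_split W HW (fun p => pi1 p = m)) as [Wm | Wm];
      pose proof (uf_inter W HW _ _ WH Wm) as W'.
    + exfalso; apply (proj2 (not_P _ W')); exists m; intros p [_ Ep]; exact Ep.
    + destruct (IH _ W') as [n [[p [[Hp Np] Ep]] Ln]].
      exfalso; apply low; exists p; split; [exact Hp | lia].
Qed.

Definition injective {A B : Type} (g : A -> B) : Prop := forall x y, g x = g y -> x = y.

Lemma increasing_injective (e : nat -> nat) :
  (forall i j, i < j -> e i < e j) -> injective e.
Proof.
  intros incr i j E; destruct (Nat.lt_total i j) as [L | [L | L]];
    [apply incr in L; lia | exact L | apply incr in L; lia].
Qed.

Lemma unbounded_enumeration (A : nat -> Prop) :
  unbounded A -> exists e : nat -> nat, (forall k, A (e k)) /\ (forall i j, i < j -> e i < e j).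
Proof.
  intro unbA.
  assert (next : forall m, {n | A n /\ m < n}).
  { intro m; apply constructive_indefinite_description.
    destruct (unbA (S m)) as [n [An Ln]]; exists n; split; [exact An | lia]. }
  set (e := fix e k := match k with
                       | 0 => proj1_sig (next 0)
                       | S k => proj1_sig (next (e k))
                       end).
  assert (step : forall k, e k < e (S k)) by (intro k; apply (proj2_sig (next (e k)))).
  exists e; split.
  - intros [|k]; apply (proj2_sig (next _)).
  - intros i j L; induction L as [|j L IH]; [apply step | specialize (step j); lia].
Qed.

Lemma unbounded_split (A : nat -> Prop) :
  unbounded A -> exists E : nat -> Prop,
    (exists e : nat -> nat, injective e /\ forall k, A (e k) /\ E (e k)) /\
    (exists e : nat -> nat, injective e /\ forall k, A (e k) /\ ~ E (e k)).
Proof.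
  intro unbA; destruct (unbounded_enumeration A unbA) as [e [Ae incr]].
  pose proof (increasing_injective e incr) as e_inj.
  exists (fun n => exists k, n = e (2 * k)); split.
  - exists (fun k => e (2 * k)); split.
    + intros i j E; apply e_inj in E; lia.
    + intro k; split; [apply Ae | now exists k].
  - exists (fun k => e (2 * k + 1)); split.
    + intros i j E; apply e_inj in E; lia.
    + intro k; split; [apply Ae|]; intros [j E]; apply e_inj in E; lia.
Qed.

(* The values of [h] at [e k] are unused by the restriction to [B], so they
   can fill the gaps off [B]. *)
Lemma injective_extension {Y : Type} (A B : nat -> Prop) (h : nat -> Y) (e : nat -> nat) :
  (forall n, B n -> A n) -> (forall m n, A m -> A n -> h m = h n -> m = n) ->
  injective e -> (forall k, A (e k) /\ ~ B (e k)) ->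
  exists g : nat -> Y, injective g /\ forall n, B n -> g n = h n.
Proof.
  intros BA h_inj e_inj e_out.
  exists (fun n => if excluded_middle_informative (B n) then h n else h (e n)); split.
  - intros m n; destruct (excluded_middle_informative (B m)) as [Bm|Bm];
      destruct (excluded_middle_informative (B n)) as [Bn|Bn]; intro E;
      pose proof (e_out m) as [Aem Bem]; pose proof (e_out n) as [Aen Ben].
    + exact (h_inj m n (BA m Bm) (BA n Bn) E).
    + apply h_inj in E; [subst; contradiction | apply BA, Bm | exact Aen].
    + apply h_inj in E; [subst; contradiction | exact Aem | apply BA, Bn].
    + exact (e_inj m n (h_inj _ _ Aem Aen E)).
  - intros n Bn; now destruct (excluded_middle_informative (B n)).
Qed.

Lemma factor_through_pi1 {Y : Type} (f : omega2 -> Y) (H : omega2 -> Prop) :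
  (forall x y, H x -> H y -> pi1 x = pi1 y -> f x = f y) ->
  exists h : nat -> Y, forall x, H x -> f x = h (pi1 x).
Proof.
  intro const_cols.
  set (rep := fun n => epsilon (inhabits (n, 0)) (fun p => H p /\ pi1 p = n)).
  exists (fun n => f (rep n)); intros x Hx.
  assert (rep_spec : H (rep (pi1 x)) /\ pi1 (rep (pi1 x)) = pi1 x)
    by (apply epsilon_spec; exists x; auto).
  apply const_cols; [exact Hx | apply rep_spec | symmetry; apply rep_spec].
Qed.

Lemma factor_through_injective (W : (omega2 -> Prop) -> Prop) {Y : Type}
    (f : omega2 -> Y) (H : omega2 -> Prop) :
  is_ultrafilter W -> W H -> unbounded (columns H) ->
  (forall x y, H x -> H y -> (f x = f y <-> pi1 x = pi1 y)) ->
  exists H', W H' /\ exists g : nat -> Y, injective g /\ forall x, H' x -> f x = g (pi1 x).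
Proof.
  intros HW WH unb f_cols.
  destruct (factor_through_pi1 f H) as [h fh]; [intros x y Hx Hy; apply f_cols; auto|].
  assert (h_inj : forall m n, columns H m -> columns H n -> h m = h n -> m = n).
  { intros m n [x [Hx <-]] [y [Hy <-]]; rewrite <- (fh x Hx), <- (fh y Hy).
    apply f_cols; assumption. }
  assert (restrict : forall (B : nat -> Prop) (e : nat -> nat), (forall n, B n -> columns H n) -> injective e ->
            (forall k, columns H (e k) /\ ~ B (e k)) -> W (fun x => H x /\ B (pi1 x)) ->
            exists H', W H' /\ exists g : nat -> Y,
              injective g /\ forall x, H' x -> f x = g (pi1 x)).
  { intros B e BA e_inj e_out WB.
    destruct (injective_extension _ B h e BA h_inj e_inj e_out) as [g [g_inj gh]].
    exists (fun x => H x /\ B (pi1 x)); split; [exact WB|].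
    exists g; split; [exact g_inj|]; intros x [Hx Bx]; rewrite gh by exact Bx; auto. }
  destruct (unbounded_split _ unb) as [E [[e_in [in_inj e_in_spec]] [e_out [out_inj e_out_spec]]]].
  destruct (uf_split W HW (fun x => E (pi1 x))) as [WE | WE].
  - apply (restrict (fun n => columns H n /\ E n) e_out).
    + intros n [Cn _]; exact Cn.
    + exact out_inj.
    + intro k; destruct (e_out_spec k); tauto.
    + apply (uf_mono W HW _ _ (uf_inter W HW _ _ WH WE)); intros x [Hx Ex].
      repeat split; [exact Hx | now exists x | exact Ex].
  - apply (restrict (fun n => columns H n /\ ~ E n) e_in).
    + intros n [Cn _]; exact Cn.
    + exact in_inj.
    + intro k; destruct (e_in_spec k); tauto.
    + apply (uf_mono W HW _ _ (uf_inter W HW _ _ WH WE)); intros x [Hx Ex].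
      repeat split; [exact Hx | now exists x | exact Ex].
Qed.

Definition neq_bit {Y : Type} (f : omega2 -> Y) (x y : omega2) : nat :=
  if excluded_middle_informative (f x = f y) then 0 else 1.

Definition shape_lr (x y : omega2) : nat :=
  (if snd x <? snd y then 0 else 2) + (if snd x <? pi1 y then 0 else 1).

Definition shape (x y : omega2) : nat :=
  if pi1 x <? pi1 y then shape_lr x y else shape_lr y x.

Definition colour {Y : Type} (f : omega2 -> Y) (x y : omega2) : nat :=
  if pi1 x =? pi1 y then neq_bit f x y else 2 + 2 * shape x y + neq_bit f x y.

Lemma neq_bit_eq {Y} (f : omega2 -> Y) x y : f x = f y -> neq_bit f x y = 0.
Proof. unfold neq_bit; destruct excluded_middle_informative; tauto. Qed.

Lemma neq_bit_neq {Y} (f : omega2 -> Y) x y : f x <> f y -> neq_bit f x y = 1.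
Proof. unfold neq_bit; destruct excluded_middle_informative; tauto. Qed.

Lemma neq_bit_le {Y} (f : omega2 -> Y) x y : neq_bit f x y <= 1.
Proof. unfold neq_bit; destruct excluded_middle_informative; lia. Qed.

Lemma neq_bit_sym {Y} (f : omega2 -> Y) x y : neq_bit f x y = neq_bit f y x.
Proof.
  destruct (classic (f x = f y)) as [E|E].
  - rewrite !neq_bit_eq; auto.
  - rewrite !neq_bit_neq; auto.
Qed.

Lemma neq_bit_congr {Y} (f : omega2 -> Y) x y u v :
  f x = f u -> f y = f v -> neq_bit f x y = neq_bit f u v.
Proof. intros Ex Ey; unfold neq_bit; now rewrite Ex, Ey. Qed.

Lemma shape_le x y : shape x y <= 3.
Proof. unfold shape, shape_lr; repeat destruct (_ <? _); lia. Qed.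

Lemma shape_sym x y : pi1 x <> pi1 y -> shape x y = shape y x.
Proof.
  intro D; unfold shape.
  destruct (Nat.ltb_spec (pi1 x) (pi1 y)), (Nat.ltb_spec (pi1 y) (pi1 x)); auto; lia.
Qed.

Lemma shape_TT x y :
  pi1 x < pi1 y -> snd x < snd y -> snd x < pi1 y -> shape x y = 0.
Proof.
  intros; unfold shape, shape_lr; rewrite !(proj2 (Nat.ltb_lt _ _)) by lia; reflexivity.
Qed.

Lemma shape_TF x y :
  pi1 x < pi1 y -> snd x < snd y -> pi1 y <= snd x -> shape x y = 1.
Proof.
  intros; unfold shape, shape_lr; rewrite !(proj2 (Nat.ltb_lt _ _)) by lia.
  rewrite (proj2 (Nat.ltb_ge _ _)) by lia; reflexivity.
Qed.

Lemma shape_FF x y :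
  pi1 x < pi1 y -> snd y <= snd x -> pi1 y <= snd x -> shape x y = 3.
Proof.
  intros; unfold shape, shape_lr; rewrite (proj2 (Nat.ltb_lt _ _)) by lia.
  rewrite !(proj2 (Nat.ltb_ge _ _)) by lia; reflexivity.
Qed.

Lemma colour_sym {Y} (f : omega2 -> Y) x y : colour f x y = colour f y x.
Proof.
  unfold colour; rewrite Nat.eqb_sym, neq_bit_sym.
  destruct (Nat.eqb_spec (pi1 y) (pi1 x)) as [|D]; [reflexivity|].
  now rewrite shape_sym by auto.
Qed.

Lemma colour_lt {Y} (f : omega2 -> Y) x y : colour f x y < 10.
Proof.
  unfold colour; pose proof (shape_le x y); pose proof (neq_bit_le f x y).
  destruct (_ =? _); lia.
Qed.

Lemma colour_same_column {Y} (f : omega2 -> Y) x y :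
  pi1 x = pi1 y -> colour f x y = neq_bit f x y.
Proof. intro E; unfold colour; now rewrite (proj2 (Nat.eqb_eq _ _) E). Qed.

Lemma colour_cross {Y} (f : omega2 -> Y) x y :
  pi1 x <> pi1 y -> colour f x y = 2 + 2 * shape x y + neq_bit f x y.
Proof. intro D; unfold colour; now rewrite (proj2 (Nat.eqb_neq _ _) D). Qed.

Lemma no_five_colours (l : list nat) (c1 c2 c3 c4 c5 : nat) :
  length l <= 4 -> NoDup [c1; c2; c3; c4; c5] ->
  In c1 l -> In c2 l -> In c3 l -> In c4 l -> In c5 l -> False.
Proof.
  intros Hl ND I1 I2 I3 I4 I5.
  assert (incl [c1; c2; c3; c4; c5] l) by (intros c Hc; simpl in Hc; intuition congruence).
  pose proof (NoDup_incl_length ND H); simpl in *; lia.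
Qed.

Definition shape_twins (H : omega2 -> Prop) (s a b : nat) : Prop :=
  exists x y y', H x /\ H y /\ H y' /\ pi1 x = a /\ pi1 y = b /\ pi1 y' = b /\
    y <> y' /\ shape x y = s /\ shape x y' = s.

Lemma pair_neq_snd (x y : omega2) : snd x <> snd y -> x <> y.
Proof. intros D E; subst; auto. Qed.

Lemma twins_TT (H : omega2 -> Prop) u v :
  tall_columns H -> H u -> H v -> pi1 u + snd u < pi1 v -> shape_twins H 0 (pi1 u) (pi1 v).
Proof.
  intros tall Hu Hv L.
  destruct (tall v Hv (S (snd u))) as [y [Hy [Ey Ly]]].
  destruct (tall v Hv (S (snd y))) as [y' [Hy' [Ey' Ly']]].
  exists u, y, y'; repeat split; auto; [apply pair_neq_snd; lia | |];
    apply shape_TT; lia.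
Qed.

Lemma twins_TF (H : omega2 -> Prop) u v :
  tall_columns H -> H u -> H v -> pi1 u < pi1 v -> shape_twins H 1 (pi1 u) (pi1 v).
Proof.
  intros tall Hu Hv L.
  destruct (tall u Hu (pi1 v)) as [x [Hx [Ex Lx]]].
  destruct (tall v Hv (S (snd x))) as [y [Hy [Ey Ly]]].
  destruct (tall v Hv (S (snd y))) as [y' [Hy' [Ey' Ly']]].
  exists x, y, y'; repeat split; auto; [apply pair_neq_snd; lia | |];
    apply shape_TF; lia.
Qed.

Lemma twins_FF (H : omega2 -> Prop) u v :
  tall_columns H -> H u -> H v -> pi1 u < pi1 v -> shape_twins H 3 (pi1 v) (pi1 u).
Proof.
  intros tall Hu Hv L.
  destruct (tall u Hu (pi1 v + snd v)) as [x [Hx [Ex Lx]]].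
  destruct (tall u Hu (S (snd x))) as [x' [Hx' [Ex' Lx']]].
  exists v, x, x'; repeat split; auto; [apply pair_neq_snd; lia | |];
    rewrite shape_sym by lia; apply shape_FF; lia.
Qed.

Lemma twins_exist (H : omega2 -> Prop) s :
  tall_columns H -> unbounded (columns H) -> s = 0 \/ s = 1 \/ s = 3 ->
  exists a b, a <> b /\ shape_twins H s a b.
Proof.
  intros tall unb Hs.
  destruct (unb 0) as [n [[u [Hu Eu]] _]].
  destruct (unb (S (pi1 u + snd u))) as [m [[v [Hv Ev]] Lv]].
  destruct Hs as [-> | [-> | ->]].
  - exists (pi1 u), (pi1 v); split; [lia | apply twins_TT; auto; lia].
  - exists (pi1 u), (pi1 v); split; [lia | apply twins_TF; auto; lia].
  - exists (pi1 v), (pi1 u); split; [lia | apply twins_FF; auto; lia].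
Qed.

Section FewColours.

Context {Y : Type} (f : omega2 -> Y) (H : omega2 -> Prop) (l : list nat).
Hypothesis tall : tall_columns H.
Hypothesis unb : unbounded (columns H).
Hypothesis few : length l <= 4.
Hypothesis colours_in : forall x y, H x -> H y -> x <> y -> In (colour f x y) l.

Lemma same_column_in x y :
  H x -> H y -> pi1 x = pi1 y -> x <> y -> In (neq_bit f x y) l.
Proof. intros Hx Hy E D; rewrite <- colour_same_column by exact E; auto. Qed.

Lemma cross_column_in x y :
  H x -> H y -> pi1 x <> pi1 y -> In (2 + 2 * shape x y + neq_bit f x y) l.
Proof.
  intros Hx Hy D; rewrite <- colour_cross by exact D.
  apply colours_in; auto; intros ->; auto.
Qed.

Lemma same_column_pair : exists u v, H u /\ H v /\ pi1 u = pi1 v /\ u <> v.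
Proof.
  destruct (unb 0) as [n [[u [Hu _]] _]].
  destruct (tall u Hu (S (snd u))) as [v [Hv [Ev Lv]]].
  exists u, v; repeat split; auto; apply pair_neq_snd; lia.
Qed.

Lemma shape_colour_in s :
  s = 0 \/ s = 1 \/ s = 3 -> exists b, b <= 1 /\ In (2 + 2 * s + b) l.
Proof.
  intro Hs; destruct (twins_exist H s tall unb Hs)
    as (a & b & D & x & y & _ & Hx & Hy & _ & Ex & Ey & _ & _ & Sy & _).
  exists (neq_bit f x y); split; [apply neq_bit_le|].
  rewrite <- Sy; apply cross_column_in; auto; congruence.
Qed.

(* Shapes 0, 1 and 3 always occur, so only one of the colours 0, 1 is left. *)
Lemma column_homogeneous :
  (forall u v, H u -> H v -> pi1 u = pi1 v -> f u = f v) \/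
  (forall u v, H u -> H v -> pi1 u = pi1 v -> u <> v -> f u <> f v).
Proof.
  destruct (classic (exists u v, H u /\ H v /\ pi1 u = pi1 v /\ u <> v /\ f u = f v))
    as [(u & v & Hu & Hv & Euv & Duv & Fuv) | none].
  - left; intros x y Hx Hy Exy; apply NNPP; intro Fxy.
    destruct (shape_colour_in 0) as [b0 [? I0]]; [auto|].
    destruct (shape_colour_in 1) as [b1 [? I1]]; [auto|].
    destruct (shape_colour_in 3) as [b3 [? I3]]; [auto|].
    apply (no_five_colours l 0 1 (2 + 2 * 0 + b0) (2 + 2 * 1 + b1) (2 + 2 * 3 + b3));
      [auto | repeat constructor; simpl; lia | | | auto ..].
    + rewrite <- (neq_bit_eq f u v Fuv); apply same_column_in; auto.
    + rewrite <- (neq_bit_neq f x y Fxy); apply same_column_in; auto.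
      intros ->; auto.
  - right; intros u v Hu Hv Euv Duv Fuv; apply none; exists u, v; auto.
Qed.

Section InjectiveOnColumns.

Hypothesis column_inj : forall u v, H u -> H v -> pi1 u = pi1 v -> u <> v -> f u <> f v.

Lemma cross_neq_colour_in s : s = 0 \/ s = 1 \/ s = 3 -> In (3 + 2 * s) l.
Proof.
  intro Hs; destruct (twins_exist H s tall unb Hs)
    as (a & b & D & x & y & y' & Hx & Hy & Hy' & Ex & Ey & Ey' & Dy & Sy & Sy').
  assert (Fy : f y <> f y') by (apply column_inj; auto; congruence).
  assert (cross_neq : forall z, H z -> pi1 z = b -> f x <> f z -> In (3 + 2 * shape x z) l).
  { intros z Hz Ez Fxz.
    replace (3 + 2 * shape x z) with (2 + 2 * shape x z + neq_bit f x z)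
      by (rewrite neq_bit_neq by exact Fxz; lia).
    apply cross_column_in; auto; congruence. }
  destruct (classic (f x = f y)) as [Fxy | Fxy].
  - rewrite <- Sy'; apply cross_neq; auto; congruence.
  - rewrite <- Sy; apply cross_neq; auto.
Qed.

Lemma injective_of_column_injective : forall x y, H x -> H y -> f x = f y -> x = y.
Proof.
  intros x y Hx Hy Fxy; apply NNPP; intro Dxy.
  destruct (Nat.eq_dec (pi1 x) (pi1 y)) as [Exy | Dcol]; [exact (column_inj x y Hx Hy Exy Dxy Fxy)|].
  destruct same_column_pair as (u & v & Hu & Hv & Euv & Duv).
  pose proof (shape_le x y).
  apply (no_five_colours l 1 (2 + 2 * shape x y) 3 5 9);
    [auto | repeat constructor; simpl; lia | | | | |].
  - rewrite <- (neq_bit_neq f u v) by (apply column_inj; auto).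
    apply same_column_in; auto.
  - replace (2 + 2 * shape x y) with (2 + 2 * shape x y + neq_bit f x y)
      by (rewrite neq_bit_eq by exact Fxy; lia).
    apply cross_column_in; auto.
  - apply (cross_neq_colour_in 0); auto.
  - apply (cross_neq_colour_in 1); auto.
  - apply (cross_neq_colour_in 3); auto.
Qed.

End InjectiveOnColumns.

Section ConstantOnColumns.

Hypothesis column_const : forall u v, H u -> H v -> pi1 u = pi1 v -> f u = f v.

(* Shapes 1 and 3 are realised between any two columns. *)
Lemma cross_colour_transfer u v s :
  H u -> H v -> pi1 u <> pi1 v -> s = 1 \/ s = 3 -> In (2 + 2 * s + neq_bit f u v) l.
Proof.
  intros Hu Hv D Hs.
  assert (oriented : forall u v, H u -> H v -> pi1 u < pi1 v ->
                       In (2 + 2 * s + neq_bit f u v) l).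
  { clear u v Hu Hv D; intros u v Hu Hv L; destruct Hs as [-> | ->].
    - destruct (twins_TF H u v tall Hu Hv L)
        as (x & y & _ & Hx & Hy & _ & Ex & Ey & _ & _ & Sxy & _).
      pose proof (cross_column_in x y Hx Hy ltac:(lia)) as I.
      rewrite Sxy, (neq_bit_congr f x y u v) in I by (apply column_const; auto).
      exact I.
    - destruct (twins_FF H u v tall Hu Hv L)
        as (x & y & _ & Hx & Hy & _ & Ex & Ey & _ & _ & Sxy & _).
      pose proof (cross_column_in x y Hx Hy ltac:(lia)) as I.
      rewrite Sxy, (neq_bit_congr f x y v u), neq_bit_sym in I by (apply column_const; auto).
      exact I. }
  destruct (proj1 (Nat.lt_gt_cases (pi1 u) (pi1 v)) D) as [L | L].
  - apply oriented; auto.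
  - rewrite neq_bit_sym; apply oriented; auto.
Qed.

Lemma cross_homogeneous :
  (forall x y, H x -> H y -> f x = f y) \/
  (forall x y, H x -> H y -> pi1 x <> pi1 y -> f x <> f y).
Proof.
  destruct (classic (exists u v, H u /\ H v /\ pi1 u <> pi1 v /\ f u <> f v))
    as [(u & v & Hu & Hv & Duv & Fuv) | none].
  - right; intros x y Hx Hy Dxy Fxy.
    destruct same_column_pair as (a & b & Ha & Hb & Eab & Dab).
    apply (no_five_colours l 0 4 5 8 9); [auto | repeat constructor; simpl; lia | | | | |].
    + rewrite <- (neq_bit_eq f a b) by (apply column_const; auto).
      apply same_column_in; auto.
    + rewrite <- (neq_bit_eq f x y Fxy); apply (cross_colour_transfer x y 1); auto.
    + rewrite <- (neq_bit_neq f u v Fuv); apply (cross_colour_transfer u v 1); auto.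
    + rewrite <- (neq_bit_eq f x y Fxy); apply (cross_colour_transfer x y 3); auto.
    + rewrite <- (neq_bit_neq f u v Fuv); apply (cross_colour_transfer u v 3); auto.
  - left; intros x y Hx Hy.
    destruct (Nat.eq_dec (pi1 x) (pi1 y)) as [E | D]; [apply column_const; auto|].
    apply NNPP; intro Fxy; apply none; exists x, y; auto.
Qed.

End ConstantOnColumns.

End FewColours.

Theorem mainTheorem6 (W : (omega2 -> Prop) -> Prop) :
  non_P_point_standard W -> weakly_Ramsey_2 W 4 -> three_functions_property W.
Proof.
  intros NP WR Y f; pose proof NP as [HW _].
  destruct (WR 10 (colour f) (fun x y _ => colour_sym f x y) (fun x y _ => colour_lt f x y))
    as [H0 [WH0 [l [few colours_in]]]].
  set (H := tall_part H0).
  assert (WH : W H) by (apply tall_part_in; auto).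
  assert (colours_in_H : forall x y, H x -> H y -> x <> y -> In (colour f x y) l)
    by (intros x y [Hx _] [Hy _]; auto).
  pose proof (tall_part_tall H0) as tall.
  pose proof (columns_unbounded W NP H WH) as unb.
  destruct (column_homogeneous f H l tall unb few colours_in_H) as [const_cols | inj_cols].
  - destruct (cross_homogeneous f H l tall unb few colours_in_H const_cols)
      as [const | inj_across].
    + exists H; auto.
    + destruct (factor_through_injective W f H HW WH unb) as [H' [WH' factor]].
      * intros x y Hx Hy; split; [|apply const_cols; auto].
        intro Fxy; apply NNPP; intro Dxy; exact (inj_across x y Hx Hy Dxy Fxy).
      * exists H'; auto.
  - exists H; split; [exact WH|right; left].
    exact (injective_of_column_injective f H l tall unb few colours_in_H inj_cols).
Qed.
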